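(* Let $\mathcal{P}$ and $\mathcal{P}'$ be $n$-dimensional simplices in $\mathbb{R}^n$ that are facet-generic, and suppose that a set $I=\{(\mathbf{n}_j,A_j): j\in\{0,\dots,n\}\}$ is a facet-indicator set of both $\mathcal{P}$ and $\mathcal{P}'$. Then there exist a vector $\mathbf{v}\in\mathbb{R}^n$ and $\epsilon\in\{-1,1\}$ such that $\mathcal{P}'=\epsilon\mathcal{P}+\mathbf{v}$. That is, an $n$-dimensional simplex is uniquely determined by a facet-indicator set of it, up to translation and reflection in a point.
   Context: An $n$-dimensional convex polytope is facet-generic if it does not contain two parallel facets ($(n-1)$-dimensional faces lying in parallel hyperplanes). For a facet-generic convex polytope $\mathcal{Q}$ with $f$ facets, a set $I=\{(\mathbf{n}_j,A_j): j\in J\}$ with $|J|=f$ is a facet-indicator set of $\mathcal{Q}$ if the facets of $\mathcal{Q}$ can be labelled $F_j$, $j\in J$ (bijectively), such that $\mathbf{n}_j$ is a unit normal vector of $F_j$, pointing either outwards or inwards (the direction is not specified), and $A_j$ is the $(n-1)$-dimensional surface measure of $F_j$. *)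

From mathcomp Require Import all_boot all_order all_algebra all_fingroup reals.
Set Implicit Arguments. Unset Strict Implicit. Unset Printing Implicit Defensive.
Import Order.TTheory GRing.Theory Num.Theory.
Local Open Scope ring_scope.

Section Simplex.
Variables (R : realType) (n : nat).
Implicit Types (x y u w : 'rV[R]_n) (p : 'I_n.+1 -> 'rV[R]_n).

Definition dotp x y : R := \sum_(i < n) x 0 i * y 0 i.

Definition aff_indep p : Prop :=
  forall c : 'I_n.+1 -> R,
    \sum_(i < n.+1) c i = 0 -> \sum_(i < n.+1) c i *: p i = 0 ->
    forall i, c i = 0.

Definition conv_hull p (x : 'rV[R]_n) : Prop :=
  exists c : 'I_n.+1 -> R,
    [/\ forall i, 0 <= c i, \sum_(i < n.+1) c i = 1 &
        x = \sum_(i < n.+1) c i *: p i].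

(* Facet k of the simplex is the convex hull of the vertices p i, i != k.
   Its supporting hyperplane (affine hull) has direction space facet_dir p k:
   the vectors sum_{i != k} c_i p_i with sum_{i != k} c_i = 0. *)
Definition facet_dir p (k : 'I_n.+1) (w : 'rV[R]_n) : Prop :=
  exists c : 'I_n.+1 -> R,
    \sum_(i < n.+1 | i != k) c i = 0 /\
    w = \sum_(i < n.+1 | i != k) c i *: p i.

Definition parallel_facets p (k l : 'I_n.+1) : Prop :=
  forall w, facet_dir p k w <-> facet_dir p l w.

Definition facet_generic p : Prop :=
  forall k l : 'I_n.+1, k != l -> ~ parallel_facets p k l.

(* u is a unit normal vector of facet k (either orientation). *)
Definition unit_normal p (k : 'I_n.+1) u : Prop :=
  dotp u u = 1 /\ forall w, facet_dir p k w -> dotp u w = 0.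

(* (n-1)-dimensional surface measure of facet k: the (n-1)-simplex with
   vertices q_0, ..., q_{n-1} (the p i, i != k, in increasing order) has
   measure sqrt(det G) / (n-1)!, where G is the Gram matrix of the edge
   vectors q_a - q_0, a = 1 .. n-1. *)
Definition facet_vertices (k : 'I_n.+1) : seq 'I_n.+1 :=
  [seq i <- enum 'I_n.+1 | i != k].

Definition facet_edge p (k : 'I_n.+1) (a : nat) : 'rV[R]_n :=
  p (nth k (facet_vertices k) a.+1) - p (nth k (facet_vertices k) 0).

Definition facet_measure p (k : 'I_n.+1) : R :=
  Num.sqrt (\det (\matrix_(a < n.-1, b < n.-1)
                    dotp (facet_edge p k a) (facet_edge p k b)))
  / (n.-1)`!%:R.

(* {(N j, A j) : j in {0..n}} is a facet-indicator set of the simplex with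
   vertices p: the facets can be labelled bijectively by j so that N j is a
   unit normal of the facet labelled j and A j is its surface measure. *)
Definition facet_indicator p (N : 'I_n.+1 -> 'rV[R]_n) (A : 'I_n.+1 -> R)
  : Prop :=
  exists s : {perm 'I_n.+1},
    forall j, unit_normal p (s j) (N j) /\ A j = facet_measure p (s j).

End Simplex.

From mathcomp Require Import all_boot all_order all_algebra all_fingroup reals.
Set Implicit Arguments. Unset Strict Implicit. Unset Printing Implicit Defensive.
Import Order.TTheory GRing.Theory Num.Theory.
Local Open Scope ring_scope.

(* Relabel the facets of both simplices so that facet j, the one opposite
   vertex j, has unit normal N j in each of them.  An edge from vertex 0 to
   vertex i+1 is then orthogonal to every N (j+1) with j <> i, and these
   normals cut out a single line; hence corresponding edges of the two
   simplices are parallel, and comparing their components along N 0 shows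
   that they are all scaled by one common factor l.  So, up to relabelling,
   q is the image of p under x |-> l x + v.  Facet measures scale by
   |l|^(n-1); since they agree and are positive, |l| = 1 when n >= 2.  When
   n = 1 the two facets are points, hence parallel, which facet-genericity
   excludes. *)

Section Simplices.
Variable R : realType.

Lemma dotpC d (x y : 'rV[R]_d) : dotp x y = dotp y x.
Proof. by apply: eq_bigr => i _; rewrite mulrC. Qed.

Lemma dotpDr d (x y z : 'rV[R]_d) : dotp x (y + z) = dotp x y + dotp x z.
Proof. by rewrite /dotp -big_split; apply: eq_bigr => i _; rewrite mxE mulrDr. Qed.

Lemma dotpZr d (x y : 'rV[R]_d) a : dotp x (a *: y) = a * dotp x y.
Proof. by rewrite /dotp mulr_sumr; apply: eq_bigr => i _; rewrite mxE mulrCA. Qed.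

Lemma dotpBr d (x y z : 'rV[R]_d) : dotp x (y - z) = dotp x y - dotp x z.
Proof. by rewrite dotpDr -scaleN1r dotpZr mulN1r. Qed.

Lemma mulmx_trE m1 m2 d (A : 'M[R]_(m1, d)) (B : 'M[R]_(m2, d)) i j :
  (A *m B^T) i j = dotp (row i A) (row j B).
Proof. by rewrite mxE; apply: eq_bigr => l _; rewrite !mxE. Qed.

Lemma dotp0r d (x : 'rV[R]_d) : dotp x 0 = 0.
Proof. by rewrite /dotp big1 // => i _; rewrite mxE mulr0. Qed.

Lemma dotp_mulmx k d (x : 'rV[R]_d) (c : 'rV[R]_k) (E : 'M[R]_(k, d)) :
  dotp x (c *m E) = \sum_l c 0 l * dotp x (row l E).
Proof.
rewrite mulmx_sum_row (big_morph (dotp x) (dotpDr x) (dotp0r x)).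
by under eq_bigr do rewrite dotpZr.
Qed.

Definition affine_free k d (w : 'I_k -> 'rV[R]_d) : Prop :=
  forall c : 'I_k -> R,
    \sum_i c i = 0 -> \sum_i c i *: w i = 0 -> forall i, c i = 0.

Lemma affine_free_inj k l d (w : 'I_k -> 'rV[R]_d) (f : 'I_l -> 'I_k) :
  injective f -> affine_free w -> affine_free (w \o f).
Proof.
move=> f_inj Hw c c_sum c_comb a.
pose C i := \sum_(b | f b == i) c b.
have sum_C (V : lmodType R) (F : 'I_k -> V) : \sum_i C i *: F i = \sum_b c b *: F (f b).
  rewrite [RHS](partition_big f xpredT) //=; apply: eq_bigr => i _.
  by rewrite scaler_suml; apply: eq_bigr => b /eqP ->.
have -> : c a = C (f a) by rewrite /C (big_pred1 a) // => b; rewrite /= (inj_eq f_inj).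
apply: Hw; last by rewrite sum_C.
by rewrite -[RHS]c_sum [RHS](partition_big f xpredT).
Qed.

Lemma affine_free_translate k d (w : 'I_k -> 'rV[R]_d) (v : 'rV[R]_d) :
  affine_free w -> affine_free (fun i => w i + v).
Proof.
move=> Hw c c_sum c_comb; apply: Hw => //; rewrite -[RHS]c_comb.
rewrite (eq_bigr _ (fun i _ => scalerDr _ _ _)) big_split /=.
by rewrite -scaler_suml c_sum scale0r addr0.
Qed.

Definition edge_mx k d (w : 'I_k.+1 -> 'rV[R]_d) : 'M[R]_(k, d) :=
  \matrix_(a < k) (w (lift ord0 a) - w ord0).

Lemma eq_edge_mx k d (w w' : 'I_k.+1 -> 'rV[R]_d) :
  w =1 w' -> edge_mx w = edge_mx w'.
Proof. by move=> ww'; apply/matrixP => a j; rewrite !mxE !ww'. Qed.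

Lemma edge_mx_affine k d (w w' : 'I_k.+1 -> 'rV[R]_d) l v :
  (forall a, w' a = l *: w a + v) -> edge_mx w' = l *: edge_mx w.
Proof.
move=> Hw'; apply/row_matrixP => a; rewrite linearZ /= !rowK !Hw'.
by rewrite opprD addrACA subrr addr0 scalerBr.
Qed.

Lemma edge_mx_free k d (w : 'I_k.+1 -> 'rV[R]_d) : affine_free w ->
  forall v : 'rV[R]_k, v *m edge_mx w = 0 -> v = 0.
Proof.
move=> Hw v vE0; apply/rowP => a; rewrite mxE.
pose c i := if unlift ord0 i is Some b then v 0 b else - \sum_b v 0 b.
have c_lift (b : 'I_k) : c (lift ord0 b) = v 0 b by rewrite /c liftK.
have c0 : c ord0 = - \sum_b v 0 b by rewrite /c unlift_none.
rewrite -c_lift; apply: Hw; rewrite big_ord_recl c0.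
  by rewrite (eq_bigr _ (fun b _ => c_lift b)) addNr.
rewrite (eq_bigr _ (fun b _ => congr1 (fun x => x *: _) (c_lift b))).
rewrite -[RHS]vE0 /edge_mx mulmx_sum_row; under [RHS]eq_bigr do rewrite rowK scalerBr.
by rewrite sumrB -scaler_suml scaleNr addrC.
Qed.

Lemma edge_mx_unit k (w : 'I_k.+1 -> 'rV[R]_k) :
  affine_free w -> edge_mx w \in unitmx.
Proof.
move=> /edge_mx_free Hw; rewrite unitmxE unitfE.
by apply/negP => /det0P [v /negP nz /Hw v0]; apply: nz; rewrite v0.
Qed.

Lemma orth_edges_eq0 k (w : 'I_k.+1 -> 'rV[R]_k) (y : 'rV[R]_k) :
  affine_free w -> (forall a, dotp y (w (lift ord0 a) - w ord0) = 0) -> y = 0.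
Proof.
move=> /edge_mx_unit Eu yE.
have yET0 : y *m (edge_mx w)^T = 0.
  by apply/rowP => a; rewrite mulmx_trE row_id rowK yE mxE.
have ETu : (edge_mx w)^T \in unitmx by rewrite unitmx_tr.
by rewrite -[y](mulmxK ETu) yET0 mul0mx.
Qed.

Definition facet_normals k d (P N : 'I_k -> 'rV[R]_d) : Prop :=
  forall j a b, a != j -> b != j -> dotp (N j) (P a - P b) = 0.

Section FacetNormals.
Variables (m : nat) (P N : 'I_m.+2 -> 'rV[R]_m.+1).
Hypothesis (HPN : facet_normals P N).

Lemma facet_normal_edge i j : i != j ->
  dotp (N (lift ord0 j)) (P (lift ord0 i) - P ord0) = 0.
Proof. by move=> ij; apply: HPN; rewrite ?(inj_eq lift_inj) // eq_sym neq_lift. Qed.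

Lemma facet_normal0_edge i :
  dotp (N ord0) (P (lift ord0 i) - P ord0) =
  dotp (N ord0) (P (lift ord0 ord0) - P ord0).
Proof.
apply/eqP; rewrite -subr_eq0 -dotpBr opprB addrA subrK.
by apply/eqP/HPN; rewrite eq_sym neq_lift.
Qed.

Hypotheses (HP : affine_free P) (N_neq0 : forall j, N j != 0).

Lemma facet_normal_edge_neq0 j :
  dotp (N (lift ord0 j)) (P (lift ord0 j) - P ord0) != 0.
Proof.
apply/eqP => H0; move/eqP: (N_neq0 (lift ord0 j)); apply.
apply: orth_edges_eq0 HP _ => i.
by have [->|ij] := eqVneq i j; last exact: facet_normal_edge.
Qed.

Lemma facet_normal0_edge_neq0 :
  dotp (N ord0) (P (lift ord0 ord0) - P ord0) != 0.
Proof.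
apply/eqP => H0; move/eqP: (N_neq0 ord0); apply.
apply: orth_edges_eq0 HP _ => i.
by rewrite facet_normal0_edge.
Qed.

Lemma collinear_edge (x : 'rV[R]_m.+1) i :
  (forall j, j != i -> dotp (N (lift ord0 j)) x = 0) ->
  exists c, x = c *: (P (lift ord0 i) - P ord0).
Proof.
move=> xN; set E := edge_mx P; set c := x *m invmx E.
have xE : x = c *m E by rewrite mulmxKV ?edge_mx_unit.
have c_eq0 j : j != i -> c 0 j = 0.
  move=> ji; have := xN j ji; rewrite xE dotp_mulmx (bigD1 j) //= big1 => [|l lj].
    rewrite addr0 rowK => /eqP.
    by rewrite mulf_eq0 (negPf (facet_normal_edge_neq0 j)) orbF => /eqP.
  by rewrite rowK facet_normal_edge ?mulr0.
exists (c 0 i); rewrite {1}xE mulmx_sum_row (bigD1 i) //= rowK big1 ?addr0 // => j ji.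
by rewrite c_eq0 ?scale0r.
Qed.

End FacetNormals.

Lemma homothetic_of_facet_normals m (P Q N : 'I_m.+2 -> 'rV[R]_m.+1) :
  affine_free P -> (forall j, N j != 0) -> facet_normals P N -> facet_normals Q N ->
  exists l, forall i, Q i - Q ord0 = l *: (P i - P ord0).
Proof.
move=> HP N_neq0 HPN HQN.
have beta_neq0 := facet_normal0_edge_neq0 HPN HP N_neq0.
exists (dotp (N ord0) (Q (lift ord0 ord0) - Q ord0) /
        dotp (N ord0) (P (lift ord0 ord0) - P ord0)) => i.
have [j ->|->] := unliftP ord0 i; last by rewrite !subrr scaler0.
have [c Qj] : exists c, Q (lift ord0 j) - Q ord0 = c *: (P (lift ord0 j) - P ord0).
  apply: (collinear_edge HPN HP N_neq0) => j' j'j.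
  by apply: facet_normal_edge; rewrite // eq_sym.
rewrite Qj -(facet_normal0_edge HQN j) Qj dotpZr (facet_normal0_edge HPN) mulfK //.
Qed.

Definition gram_mx k d (w : 'I_k.+1 -> 'rV[R]_d) : 'M[R]_k :=
  edge_mx w *m (edge_mx w)^T.

Lemma edge_mx_orth k d (w : 'I_k.+1 -> 'rV[R]_d) u :
  (forall a b, dotp u (w a - w b) = 0) -> edge_mx w *m u^T = 0.
Proof.
by move=> wu; apply/matrixP => a i; rewrite mulmx_trE row_id rowK dotpC wu mxE.
Qed.

Lemma det_col_mx_mul_tr k (E : 'M[R]_(k, k.+1)) (u v : 'rV[R]_k.+1) :
  E *m u^T = 0 ->
  \det (col_mx v E *m (col_mx u E)^T) = dotp v u * \det (E *m E^T).
Proof.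
by move=> Eu0; rewrite tr_col_mx mul_col_row Eu0 det_ublock det_mx11 mulmx_trE !row_id.
Qed.

Lemma det_vertex_mx k (w : 'I_k.+1 -> 'rV[R]_k.+1) :
  \det (\matrix_a w a) = \det (col_mx (w ord0) (edge_mx w)).
Proof.
have -> : \matrix_a w a = col_mx (w ord0) (\matrix_a w (lift ord0 a)) :> 'M_(1 + k, _).
  apply/matrixP => i j; rewrite !mxE; case: splitP => [i0|i1] Hi.
    by rewrite (ord1 i0) (_ : i = ord0) //; apply/val_inj; rewrite /= Hi (ord1 i0).
  by rewrite mxE (_ : i = lift ord0 i1) //; apply/val_inj.
pose D : 'M[R]_(1 + k) := block_mx 1 0 (- const_mx 1) 1.
have -> : col_mx (w ord0) (edge_mx w) = D *m col_mx (w ord0) (\matrix_a w (lift ord0 a)).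
  rewrite mul_block_col !mul1mx mul0mx addr0; congr col_mx.
  by apply/matrixP => a j; rewrite !mxE big_ord1 !mxE mulN1r addrC.
by rewrite det_mulmx det_lblock !det1 !mul1r.
Qed.

Section HyperplaneSimplex.
Variables (k : nat) (u : 'rV[R]_k.+1).
Hypothesis uu : dotp u u = 1.

Lemma det_gram_normal (w : 'I_k.+1 -> 'rV[R]_k.+1) :
  (forall a b, dotp u (w a - w b) = 0) ->
  \det (gram_mx w) = \det (col_mx u (edge_mx w)) ^+ 2.
Proof.
move=> wu; rewrite expr2 -{2}(det_tr (col_mx u _)) -det_mulmx.
by rewrite det_col_mx_mul_tr ?edge_mx_orth // uu mul1r.
Qed.

Lemma det_normal_edges_neq0 (w : 'I_k.+1 -> 'rV[R]_k.+1) :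
  affine_free w -> (forall a b, dotp u (w a - w b) = 0) ->
  \det (col_mx u (edge_mx w)) != 0.
Proof.
move=> Hw wu; apply/negP => /det0P [v /negP v_neq0 vF0]; apply: v_neq0.
rewrite -[v]hsubmxK mul_row_col in vF0 *.
have uuT : u *m u^T = 1%:M.
  by apply/matrixP => i j; rewrite !ord1 mulmx_trE !row_id uu mxE.
have v0 : lsubmx v = 0.
  have := congr1 (mulmx^~ u^T) vF0.
  by rewrite mulmxDl -!mulmxA uuT edge_mx_orth // mulmx0 addr0 mulmx1 mul0mx.
by move: vF0; rewrite v0 mul0mx add0r => /(edge_mx_free Hw) ->; rewrite row_mx0.
Qed.

(* By [det_vertex_mx] the vertex matrix may be replaced by
   [col_mx (w ord0) E]; multiplied by [(col_mx u E)^T], it and [col_mx u E]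
   both give [\det (gram_mx w)], since [dotp (w ord0) u = dotp u u = 1]. *)
Lemma det_vertices_on_hyperplane (w : 'I_k.+1 -> 'rV[R]_k.+1) :
  affine_free w -> (forall a, dotp u (w a) = 1) ->
  \det (\matrix_a w a) = \det (col_mx u (edge_mx w)).
Proof.
move=> Hw wu1; have wu a b : dotp u (w a - w b) = 0 by rewrite dotpBr !wu1 subrr.
apply: (mulIf (det_normal_edges_neq0 Hw wu)).
have key (v : 'rV[R]_k.+1) :
    \det (col_mx v (edge_mx w)) * \det (col_mx u (edge_mx w)) =
    dotp v u * \det (gram_mx w).
  by rewrite -(det_tr (col_mx u _)) -det_mulmx det_col_mx_mul_tr ?edge_mx_orth.
by rewrite det_vertex_mx !key dotpC wu1 uu.
Qed.

(* Translating along u moves the facet into the hyperplane [dotp u x = 1];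
   there the Gram determinant is the squared determinant of the vertex
   matrix, which a relabelling of the vertices only multiplies by a sign. *)
Lemma det_gram_vertices (w : 'I_k.+1 -> 'rV[R]_k.+1) :
  affine_free w -> (forall a b, dotp u (w a - w b) = 0) ->
  \det (gram_mx w) = \det (\matrix_a (w a + (1 - dotp u (w ord0)) *: u)) ^+ 2.
Proof.
move=> Hw wu; pose w' a := w a + (1 - dotp u (w ord0)) *: u.
have Ew : edge_mx w' = edge_mx w.
  by rewrite -[RHS]scale1r; apply: edge_mx_affine => a; rewrite scale1r.
have w'u a : dotp u (w' a) = 1.
  rewrite dotpDr dotpZr uu mulr1.
  have -> : dotp u (w a) = dotp u (w ord0) by apply/eqP; rewrite -subr_eq0 -dotpBr wu.
  by rewrite addrC subrK.
rewrite (det_vertices_on_hyperplane (w := w')) ?Ew ?det_gram_normal //.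
exact: affine_free_translate.
Qed.

Lemma det_gram_perm (w : 'I_k.+1 -> 'rV[R]_k.+1) (s : 'S_k.+1) :
  affine_free w -> (forall a b, dotp u (w a - w b) = 0) ->
  \det (gram_mx (w \o s)) = \det (gram_mx w).
Proof.
move=> Hw wu; have wsu a b : dotp u ((w \o s) a - (w \o s) b) = 0 by apply: wu.
rewrite !det_gram_vertices //=; last exact: affine_free_inj perm_inj Hw.
have -> : dotp u (w (s ord0)) = dotp u (w ord0).
  by apply/eqP; rewrite -subr_eq0 -dotpBr wu.
set c := 1 - _.
have -> : \matrix_a (w (s a) + c *: u) = perm_mx s *m \matrix_a (w a + c *: u).
  by rewrite -row_permE; apply/matrixP => a j; rewrite !mxE.
by rewrite det_mulmx det_perm exprMn sqrr_sign mul1r.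
Qed.

End HyperplaneSimplex.

Lemma mem_facet_vertices n (kk i : 'I_n.+1) : (i \in facet_vertices kk) = (i != kk).
Proof. by rewrite mem_filter mem_enum andbT. Qed.

Lemma facet_vertices_uniq n (kk : 'I_n.+1) : uniq (facet_vertices kk).
Proof. exact/filter_uniq/enum_uniq. Qed.

Lemma size_facet_vertices n (kk : 'I_n.+1) : size (facet_vertices kk) = n.
Proof.
rewrite -(card_uniqP (facet_vertices_uniq kk)) (@eq_card _ _ (predC1 kk)).
  by rewrite cardC1 card_ord.
by move=> i; rewrite mem_facet_vertices.
Qed.

Lemma big_facet_vertices (V : nmodType) n (kk : 'I_n.+1) (F : 'I_n.+1 -> V) :
  \sum_(a < n) F (nth kk (facet_vertices kk) a) = \sum_(i | i != kk) F i.
Proof.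
transitivity (\sum_(i <- facet_vertices kk) F i).
  by rewrite (big_nth kk) size_facet_vertices big_mkord.
by rewrite big_filter big_enum_cond.
Qed.

Lemma facet_vertex_neq n (kk : 'I_n.+1) (a : 'I_n) : nth kk (facet_vertices kk) a != kk.
Proof. by rewrite -mem_facet_vertices mem_nth ?size_facet_vertices. Qed.

Lemma facet_vertex_inj n (kk : 'I_n.+1) :
  injective (fun a : 'I_n => nth kk (facet_vertices kk) a).
Proof.
move=> a b /eqP; rewrite nth_uniq ?size_facet_vertices ?facet_vertices_uniq //.
by move/eqP/val_inj.
Qed.

Lemma facet_vertices_relabel n (sg : {perm 'I_n.+2}) (kk : 'I_n.+2) :
  exists s : 'S_n.+1, forall a : 'I_n.+1,
    sg (nth kk (facet_vertices kk) a) = nth (sg kk) (facet_vertices (sg kk)) (s a).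
Proof.
set L := facet_vertices kk; set L' := facet_vertices (sg kk).
pose f (a : 'I_n.+1) : 'I_n.+1 := inord (index (sg (nth kk L a)) L').
have fE a : nth (sg kk) L' (f a) = sg (nth kk L a).
  have inL' : sg (nth kk L a) \in L'.
    by rewrite mem_facet_vertices (inj_eq perm_inj) facet_vertex_neq.
  have := index_mem (sg (nth kk L a)) L'; rewrite inL' size_facet_vertices => ilt.
  by rewrite inordK ?nth_index.
have f_inj : injective f.
  move=> a b fab; apply: (facet_vertex_inj (kk := kk)); apply: (@perm_inj _ sg).
  by rewrite /= -!fE fab.
by exists (perm f_inj) => a; rewrite permE fE.
Qed.

Definition facet_pts n d (p : 'I_n.+1 -> 'rV[R]_d) (kk : 'I_n.+1) (a : 'I_n) :=
  p (nth kk (facet_vertices kk) a).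

Lemma facet_pts_free n d (p : 'I_n.+1 -> 'rV[R]_d) kk :
  affine_free p -> affine_free (facet_pts p kk).
Proof. exact/affine_free_inj/facet_vertex_inj. Qed.

Lemma facet_dir_sub n (p : 'I_n.+1 -> 'rV[R]_n) kk a b :
  a != kk -> b != kk -> facet_dir p kk (p a - p b).
Proof.
move=> akk bkk; exists (fun i => (i == a)%:R - (i == b)%:R).
have ind c : c != kk -> \sum_(i | i != kk) (i == c)%:R = 1 :> R.
  by move=> ckk; rewrite (bigD1 c) //= eqxx big1 ?addr0 // => i /andP [_ /negPf ->].
have indZ c : c != kk -> \sum_(i | i != kk) (i == c)%:R *: p i = p c.
  move=> ckk; rewrite (bigD1 c) //= eqxx scale1r big1 ?addr0 // => i /andP [_ /negPf ->].
  by rewrite scale0r.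
split; first by rewrite sumrB !ind ?subrr.
by under eq_bigr do rewrite scalerBl; rewrite sumrB !indZ.
Qed.

Lemma dotp_facet_normal n (p : 'I_n.+1 -> 'rV[R]_n) kk u a b :
  unit_normal p kk u -> a != kk -> b != kk -> dotp u (p a - p b) = 0.
Proof. by move=> [_ Hu] akk bkk; apply/Hu/facet_dir_sub. Qed.

Lemma unit_normal_neq0 n (p : 'I_n.+1 -> 'rV[R]_n) kk u :
  unit_normal p kk u -> u != 0.
Proof.
case=> uu _; apply/eqP => u0; move: uu.
by rewrite u0 dotp0r => /eqP; rewrite eq_sym oner_eq0.
Qed.

Lemma facet_pts_orth n (p : 'I_n.+1 -> 'rV[R]_n) kk u :
  unit_normal p kk u -> forall a b, dotp u (facet_pts p kk a - facet_pts p kk b) = 0.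
Proof. by move=> Hu a b; apply: (dotp_facet_normal Hu); apply: facet_vertex_neq. Qed.

Lemma facet_normals_relabel n (p N : 'I_n.+1 -> 'rV[R]_n) (s : {perm 'I_n.+1}) :
  (forall j, unit_normal p (s j) (N j)) -> facet_normals (p \o s) N.
Proof.
by move=> HN j a b aj bj; apply: (dotp_facet_normal (HN j)); rewrite (inj_eq perm_inj).
Qed.

Lemma facet_measureE k (p : 'I_k.+2 -> 'rV[R]_k.+1) kk :
  facet_measure p kk = Num.sqrt (\det (gram_mx (facet_pts p kk))) / k`!%:R.
Proof.
rewrite /facet_measure /=; do 3 f_equal.
by apply/matrixP => a b; rewrite mulmx_trE !rowK mxE.
Qed.

Lemma facet_measure_gt0 k (p : 'I_k.+2 -> 'rV[R]_k.+1) kk u :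
  affine_free p -> unit_normal p kk u -> 0 < facet_measure p kk.
Proof.
move=> Hp Hu; have [uu _] := Hu; have wu := facet_pts_orth Hu.
rewrite facet_measureE divr_gt0 ?ltr0n ?fact_gt0 // sqrtr_gt0 (det_gram_normal uu wu).
by rewrite exprn_even_gt0 //= (det_normal_edges_neq0 uu (facet_pts_free Hp) wu).
Qed.

Lemma facet_measure_affine k (q r : 'I_k.+2 -> 'rV[R]_k.+1) l v kk :
  (forall x, q x = l *: r x + v) ->
  facet_measure q kk = `|l| ^+ k * facet_measure r kk.
Proof.
move=> qr; rewrite !facet_measureE.
have -> : gram_mx (facet_pts q kk) = l ^+ 2 *: gram_mx (facet_pts r kk).
  rewrite /gram_mx (edge_mx_affine (w := facet_pts r kk) (fun a => qr _)).
  by rewrite linearZ /= -scalemxAl -scalemxAr scalerA -expr2.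
rewrite detZ (sqrtrM _ (exprn_ge0 k (sqr_ge0 l))) -exprM mulnC exprM sqrtr_sqr normrX.
by rewrite mulrA.
Qed.

Lemma facet_measure_relabel k (p : 'I_k.+2 -> 'rV[R]_k.+1) (sg : {perm 'I_k.+2}) kk u :
  affine_free p -> unit_normal p (sg kk) u ->
  facet_measure (p \o sg) kk = facet_measure p (sg kk).
Proof.
move=> Hp Hu; have [uu _] := Hu; have [s Hs] := facet_vertices_relabel sg kk.
rewrite !facet_measureE -(det_gram_perm uu s (facet_pts_free Hp) (facet_pts_orth Hu)).
rewrite /gram_mx (@eq_edge_mx _ _ _ (facet_pts p (sg kk) \o s)) // => a.
by rewrite /facet_pts /= Hs.
Qed.

Lemma homothety_norm_eq1 k (p q : 'I_k.+3 -> 'rV[R]_k.+2) (sg : {perm 'I_k.+3}) l v kk u :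
  affine_free p -> unit_normal p (sg kk) u -> (forall x, q x = l *: p (sg x) + v) ->
  facet_measure q kk = facet_measure p (sg kk) -> `|l| = 1.
Proof.
move=> Hp Hu qE; have A_gt0 := facet_measure_gt0 Hp Hu.
rewrite (facet_measure_affine (r := p \o sg) _ qE) (facet_measure_relabel Hp Hu).
move/eqP; rewrite -subr_eq0 -{2}[facet_measure p _]mul1r -mulrBl mulf_eq0.
by rewrite (gt_eqF A_gt0) orbF subr_eq0 pexpr_eq1 // => /eqP.
Qed.

Lemma facet_dir_dim1 (p : 'I_2 -> 'rV[R]_1) kk w : facet_dir p kk w <-> w = 0.
Proof.
split => [[c [c_sum ->]] | ->]; last first.
  by exists (fun=> 0); rewrite big1 ?big1 // => i _; rewrite scale0r.
move: c_sum; rewrite -!(big_facet_vertices kk) !big_ord1 => ->.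
by rewrite scale0r.
Qed.

Lemma conv_hull_relabel n (p : 'I_n.+1 -> 'rV[R]_n) (sg : {perm 'I_n.+1}) y :
  conv_hull (p \o sg) y <-> conv_hull p y.
Proof.
have reindex (V : nmodType) (F : 'I_n.+1 -> V) : \sum_i F (sg i) = \sum_i F i.
  by rewrite [RHS](reindex_inj (@perm_inj _ sg)).
split=> -[c [c_ge0 c_sum ->]].
  exists (fun i => c (sg^-1 i)%g); split=> //.
    by rewrite -[RHS]c_sum -reindex; apply: eq_bigr => i _; rewrite permK.
  by rewrite -[RHS]reindex; apply: eq_bigr => i _; rewrite /= permK.
exists (fun i => c (sg i)); split=> //; first by rewrite reindex.
by rewrite -reindex.
Qed.

Lemma conv_hull_affine n (q r : 'I_n.+1 -> 'rV[R]_n) l v :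
  (forall x, q x = l *: r x + v) ->
  forall y, conv_hull q y <-> exists z, conv_hull r z /\ y = l *: z + v.
Proof.
move=> qr y; have comb (c : 'I_n.+1 -> R) : \sum_i c i = 1 ->
    \sum_i c i *: q i = l *: \sum_i c i *: r i + v.
  move=> c_sum; under eq_bigr do rewrite qr scalerDr scalerA mulrC -scalerA.
  by rewrite big_split /= -scaler_sumr -scaler_suml c_sum scale1r.
split=> [[c [c_ge0 c_sum ->]] | [_ [[c [c_ge0 c_sum ->]] ->]]].
  by exists (\sum_i c i *: r i); split; [exists c | rewrite comb].
by exists c; rewrite comb.
Qed.

Lemma conv_hull_homothety n (p q : 'I_n.+1 -> 'rV[R]_n) (sg : {perm 'I_n.+1}) l v :
  (forall x, q x = l *: p (sg x) + v) ->
  forall y, conv_hull q y <-> exists z, conv_hull p z /\ y = l *: z + v.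
Proof.
move=> qE y; rewrite (conv_hull_affine (r := p \o sg) qE).
by split=> -[z [Hz ->]]; exists z; split=> //; move: Hz; rewrite conv_hull_relabel.
Qed.

End Simplices.

Unset Implicit Arguments.

Theorem theorem2 (R : realType) (n : nat) (p q : 'I_n.+1 -> 'rV[R]_n)
  (N : 'I_n.+1 -> 'rV[R]_n) (A : 'I_n.+1 -> R) :
  aff_indep p -> aff_indep q ->
  facet_generic p -> facet_generic q ->
  facet_indicator p N A -> facet_indicator q N A ->
  exists (v : 'rV[R]_n) (eps : R), (eps = 1 \/ eps = -1) /\
    forall x : 'rV[R]_n,
      conv_hull q x <-> exists y, conv_hull p y /\ x = eps *: y + v.
Proof.
case: n p q N A => [|[|m]] p q N A Hp _ Gp _ [s Hs] [t Ht].
- exists 0, 1; split; first by left.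
  apply: conv_hull_affine => x; rewrite scale1r addr0.
  by apply/rowP => -[].
- by case: (Gp ord0 ord_max isT) => w; rewrite !facet_dir_dim1.
have N_neq0 j : N j != 0 := unit_normal_neq0 (Hs j).1.
have [l Hl] := homothetic_of_facet_normals (affine_free_inj (@perm_inj _ s) Hp) N_neq0
  (facet_normals_relabel (fun j => (Hs j).1)) (facet_normals_relabel (fun j => (Ht j).1)).
pose sg := (t^-1 * s)%g; pose v := q (t ord0) - l *: p (s ord0).
have qE x : q x = l *: p (sg x) + v.
  have := Hl (t^-1 x)%g; rewrite /= permKV => /eqP; rewrite subr_eq => /eqP ->.
  by rewrite /v permM scalerBr addrAC -addrA.
have sg_t0 : sg (t ord0) = s ord0 by rewrite permM permK.
have l_norm : `|l| = 1.
  apply: (homothety_norm_eq1 (kk := t ord0) Hp _ qE); rewrite sg_t0.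
    exact: (Hs ord0).1.
  by rewrite -(Hs ord0).2 -(Ht ord0).2.
exists v, l; split; last exact: conv_hull_homothety qE.
by move/eqP: l_norm; rewrite eqr_norml ler01 andbT => /orP [] /eqP; [left | right].
Qed.
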